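(* For every hypothesis class $\mathcal{H}\subseteq\{0,1\}^{\mathcal{X}}$, $\mathtt{CD}(\mathcal{H})\le\max\{2\,\mathtt{LD}(\mathcal{H})\log_2(\mathtt{LD}(\mathcal{H})),\,300\}$ (with the convention $0\log_2 0=0$).
   Context: A dataset of size $m$ is $S=((x_1,y_1),\dots,(x_m,y_m))\in(\mathcal{X}\times\{0,1\})^m$; it is $\mathcal{H}$-realizable if some $h\in\mathcal{H}$ satisfies $h(x_i)=y_i$ for all $i$. $G_m(\mathcal{H})$ is the graph on realizable datasets of size $m$ with $S,S'$ adjacent iff there is $x$ with $(x,0)$ appearing in $S$ and $(x,1)$ appearing in $S'$; $\omega_m$ is its clique number; $\mathtt{CD}(\mathcal{H})=\sup\{m:\omega_m=2^m\}$. A mistake tree is a complete binary tree whose internal nodes are labeled by points of $\mathcal{X}$, each internal node having one outgoing edge labeled $0$ and one labeled $1$; a root-to-leaf path yields the sequence of (node label, edge label) pairs. $\mathcal{H}$ shatters the tree if every root-to-leaf path is realizable by $\mathcal{H}$. $\mathtt{LD}(\mathcal{H})$ is the largest depth of a complete mistake tree shattered by $\mathcal{H}$ ($\infty$ if unbounded). *)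

From Stdlib Require Import Reals List.
Import ListNotations.
Set Implicit Arguments.

(* Labels {0,1} are encoded as bool: 0 = false, 1 = true.
   A hypothesis class over domain X is a set of functions X -> bool. *)
Definition hclass (X : Type) := (X -> bool) -> Prop.

Definition dataset (X : Type) := list (X * bool).

Definition realizable (X : Type) (H : hclass X) (S : dataset X) : Prop :=
  exists h, H h /\ forall x y, In (x, y) S -> h x = y.

Definition vertex (X : Type) (H : hclass X) (m : nat) (S : dataset X) : Prop :=
  length S = m /\ realizable H S.

Definition adjacent (X : Type) (S S' : dataset X) : Prop :=
  exists x, (In (x, false) S /\ In (x, true) S') \/
            (In (x, false) S' /\ In (x, true) S).

Definition is_clique (X : Type) (H : hclass X) (m : nat) (C : list (dataset X)) : Prop :=
  NoDup C /\ (forall S, In S C -> vertex H m S) /\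
  (forall S S', In S C -> In S' C -> S <> S' -> adjacent S S').

Definition has_clique (X : Type) (H : hclass X) (m k : nat) : Prop :=
  exists C, is_clique H m C /\ length C = k.

Definition clique_number_eq (X : Type) (H : hclass X) (m k : nat) : Prop :=
  has_clique H m k /\ forall k', has_clique H m k' -> k' <= k.

(* Mistake trees: binary trees whose internal nodes are labeled by points;
   the left child is the 0-edge, the right child the 1-edge. *)
Inductive mtree (X : Type) : Type :=
| Leaf : mtree X
| Node : X -> mtree X -> mtree X -> mtree X.
Arguments Leaf {X}.

Fixpoint complete_depth (X : Type) (t : mtree X) (d : nat) : Prop :=
  match t, d with
  | Leaf, 0 => True
  | Node _ t0 t1, S d' => complete_depth t0 d' /\ complete_depth t1 d'
  | _, _ => False
  end.

Fixpoint paths (X : Type) (t : mtree X) : list (dataset X) :=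
  match t with
  | Leaf => [ [] ]
  | Node x t0 t1 => map (cons (x, false)) (paths t0) ++ map (cons (x, true)) (paths t1)
  end.

Definition shatters (X : Type) (H : hclass X) (t : mtree X) : Prop :=
  forall p, In p (paths t) -> realizable H p.

Definition shatters_depth (X : Type) (H : hclass X) (d : nat) : Prop :=
  exists t, complete_depth t d /\ shatters H t.

Definition LD_eq (X : Type) (H : hclass X) (d : nat) : Prop :=
  shatters_depth H d /\ forall d', shatters_depth H d' -> d' <= d.

Definition two_d_log2_d (d : nat) : R :=
  match d with
  | 0 => 0%R
  | _ => (2 * INR d * (ln (INR d) / ln 2))%R
  end.

From Stdlib Require Import Reals List.
From Stdlib Require Import Arith Lia ZArith Lra ClassicalEpsilon.
Import ListNotations.

(* Let C be a clique of G_m(H) and n_b(x) the number of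
   datasets of C containing (x, b).  Double counting the witnesses of the
   pairwise adjacencies against the at most m labelled points of each dataset
   shows that a clique of size 2mt has a point x with n_0(x), n_1(x) >= t
   (balanced_point).  Splitting at such a point and recursing on the two
   restricted classes turns a clique of size (2m)^k into a shattered mistake
   tree of depth k (clique_shatters).  So omega_m = 2^m and LD(H) = d give
   2^m < (2m)^(d+1).

   For m >= 301 this inequality forces 2^m <= d^(2d), i.e.
   m <= 2 d log2 d: the map m |-> 2^m / (2m)^(d+1) is nondecreasing from
   m = 2(d+1) on, and it is already >= 1 at m = 301 when d <= 31 and at
   m = floor (log2 (d^(2d))) when d >= 32.  The theorem follows by cases on
   m <= 300. *)

(* Classical decision of a proposition, used to count points of an
   arbitrary type [X], which carries no decidable equality. *)
Definition decb (P : Prop) : bool := if excluded_middle_informative P then true else false.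

Lemma decb_spec (P : Prop) : decb P = true <-> P.
Proof. unfold decb; destruct (excluded_middle_informative P); split; congruence || tauto. Qed.

Definition ind (P : Prop) : nat := if decb P then 1 else 0.

Lemma ind_true (P : Prop) : P -> ind P = 1.
Proof. intros HP. unfold ind. apply decb_spec in HP. now rewrite HP. Qed.

Lemma ind_false (P : Prop) : ~ P -> ind P = 0.
Proof.
  intros HP. unfold ind. destruct (decb P) eqn:E; [|reflexivity].
  exfalso. apply HP, decb_spec, E.
Qed.

Fixpoint sum_over {A : Type} (l : list A) (f : A -> nat) : nat :=
  match l with [] => 0 | a :: l => f a + sum_over l f end.

Lemma sum_over_plus {A : Type} (l : list A) (f g : A -> nat) :
  sum_over l (fun a => f a + g a) = sum_over l f + sum_over l g.
Proof. induction l; simpl; lia. Qed.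

Lemma sum_over_le {A : Type} (l : list A) (f g : A -> nat) :
  (forall a, In a l -> f a <= g a) -> sum_over l f <= sum_over l g.
Proof.
  induction l as [|a l IH]; simpl; intros Hfg; [lia|].
  specialize (IH (fun b Hb => Hfg b (or_intror Hb))).
  specialize (Hfg a (or_introl eq_refl)). lia.
Qed.

Lemma sum_over_ext {A : Type} (l : list A) (f g : A -> nat) :
  (forall a, In a l -> f a = g a) -> sum_over l f = sum_over l g.
Proof. intros Hfg. apply Nat.le_antisymm; apply sum_over_le; intros a Ha; rewrite Hfg; auto. Qed.

Lemma sum_over_mul_l {A : Type} (l : list A) (c : nat) (f : A -> nat) :
  sum_over l (fun a => c * f a) = c * sum_over l f.
Proof. induction l; simpl; lia. Qed.

Lemma sum_over_mul_r {A : Type} (l : list A) (c : nat) (f : A -> nat) :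
  sum_over l (fun a => f a * c) = sum_over l f * c.
Proof. induction l; simpl; lia. Qed.

Lemma sum_over_const {A : Type} (l : list A) (c : nat) :
  sum_over l (fun _ => c) = c * length l.
Proof. induction l; simpl; lia. Qed.

Lemma sum_over_elem {A : Type} (l : list A) (f : A -> nat) (a : A) :
  In a l -> f a <= sum_over l f.
Proof.
  induction l as [|b l IH]; simpl; [intros []|].
  intros [->|Ha]; [lia|]. specialize (IH Ha). lia.
Qed.

Lemma sum_over_swap {A B : Type} (l : list A) (l' : list B) (f : A -> B -> nat) :
  sum_over l (fun a => sum_over l' (f a)) = sum_over l' (fun b => sum_over l (fun a => f a b)).
Proof.
  induction l as [|a l IH]; simpl.
  - induction l'; simpl; lia.
  - rewrite IH, <- sum_over_plus. reflexivity.
Qed.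

Lemma sum_over_ind_filter {A : Type} (l : list A) (P : A -> Prop) :
  sum_over l (fun a => ind (P a)) = length (filter (fun a => decb (P a)) l).
Proof.
  induction l as [|a l IH]; simpl; [reflexivity|].
  rewrite IH. unfold ind. destruct (decb (P a)); simpl; lia.
Qed.

Lemma sum_over_ind_NoDup {A : Type} (pts L : list A) :
  NoDup pts -> sum_over pts (fun x => ind (In x L)) <= length L.
Proof.
  intros Hn. rewrite sum_over_ind_filter. apply NoDup_incl_length.
  - apply NoDup_filter, Hn.
  - intros x Hx. apply filter_In in Hx. apply decb_spec, Hx.
Qed.

Lemma sum_over_neq {A : Type} (l : list A) (a : A) :
  NoDup l -> length l - 1 <= sum_over l (fun b => ind (a <> b)).
Proof.
  induction 1 as [|x l Hx Hl IH]; simpl; [lia|].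
  destruct (classic (a = x)) as [->|ne].
  - rewrite (sum_over_ext l _ (fun _ => 1)), sum_over_const; [lia|].
    intros b Hb. apply ind_true. intros ->. contradiction.
  - rewrite ind_true by exact ne. lia.
Qed.

Definition count_label {X : Type} (C : list (dataset X)) (b : bool) (x : X) : nat :=
  sum_over C (fun S => ind (In (x, b) S)).

Definition points {X : Type} (C : list (dataset X)) : list X :=
  nodup (fun a b : X => excluded_middle_informative (a = b)) (flat_map (map fst) C).

Lemma points_NoDup {X : Type} (C : list (dataset X)) : NoDup (points C).
Proof. apply NoDup_nodup. Qed.

Lemma points_In {X : Type} (C : list (dataset X)) (S : dataset X) (x : X) (b : bool) :
  In S C -> In (x, b) S -> In x (points C).
Proof.
  intros HS Hx. apply nodup_In, in_flat_map. exists S. split; [exact HS|].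
  apply in_map_iff. exists (x, b). auto.
Qed.

Definition cross {X : Type} (S S' : dataset X) (x : X) : nat :=
  ind (In (x, false) S) * ind (In (x, true) S') + ind (In (x, true) S) * ind (In (x, false) S').

Lemma adjacent_cross {X : Type} (C : list (dataset X)) (S S' : dataset X) :
  In S C -> In S' C -> adjacent S S' -> 1 <= sum_over (points C) (cross S S').
Proof.
  intros HS HS' [x [[H0 H1]|[H0 H1]]].
  - eapply Nat.le_trans; [|apply (sum_over_elem _ _ x); eapply points_In; eauto].
    unfold cross. rewrite (ind_true (In (x, false) S)), (ind_true (In (x, true) S')) by auto.
    lia.
  - eapply Nat.le_trans; [|apply (sum_over_elem _ _ x); eapply points_In; eauto].
    unfold cross. rewrite (ind_true (In (x, true) S)), (ind_true (In (x, false) S')) by auto.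
    lia.
Qed.

Lemma sum_cross {X : Type} (C : list (dataset X)) :
  sum_over C (fun S => sum_over C (fun S' => sum_over (points C) (cross S S'))) =
  sum_over (points C) (fun x => 2 * (count_label C false x * count_label C true x)).
Proof.
  rewrite (sum_over_ext C _ (fun S => sum_over (points C) (fun x => sum_over C (fun S' => cross S S' x))))
    by (intros S _; apply sum_over_swap).
  rewrite sum_over_swap. apply sum_over_ext. intros x _. unfold cross, count_label.
  rewrite (sum_over_ext C _ (fun S => ind (In (x, false) S) * count_label C true x +
                                       ind (In (x, true) S) * count_label C false x)).
  - rewrite sum_over_plus, !sum_over_mul_r. unfold count_label. lia.
  - intros S _. rewrite sum_over_plus, !sum_over_mul_l. reflexivity.
Qed.

(* In a clique of size [K] the [K (K - 1)] ordered pairs of distinct datasets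
   all have witnesses, so [K (K - 1) <= sum_x 2 n_0(x) n_1(x)]. *)
Lemma ordered_pairs_bound {X : Type} (C : list (dataset X)) :
  NoDup C -> (forall S S', In S C -> In S' C -> S <> S' -> adjacent S S') ->
  length C * (length C - 1) <=
  sum_over (points C) (fun x => 2 * (count_label C false x * count_label C true x)).
Proof.
  intros Hnd Hadj. rewrite <- sum_cross.
  replace (length C * (length C - 1)) with (sum_over C (fun _ => length C - 1))
    by (rewrite sum_over_const; lia).
  apply sum_over_le. intros S HS.
  eapply Nat.le_trans; [apply (sum_over_neq C S Hnd)|].
  apply sum_over_le. intros S' HS'.
  destruct (classic (S = S')) as [<-|ne].
  - rewrite ind_false by tauto. lia.
  - rewrite ind_true by exact ne. apply adjacent_cross; auto.
Qed.

Lemma realizable_consistent {X : Type} (H : hclass X) (S : dataset X) (x : X) :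
  realizable H S -> In (x, false) S -> In (x, true) S -> False.
Proof. intros [h [_ Hh]] H0 H1. apply Hh in H0. apply Hh in H1. congruence. Qed.

Lemma dataset_label_count {X : Type} (H : hclass X) (pts : list X) (S : dataset X) :
  NoDup pts -> realizable H S ->
  sum_over pts (fun x => ind (In (x, false) S) + ind (In (x, true) S)) <= length S.
Proof.
  intros Hpts HS. rewrite <- (length_map fst S).
  eapply Nat.le_trans; [|apply (sum_over_ind_NoDup pts (map fst S) Hpts)].
  apply sum_over_le. intros x _.
  destruct (classic (In (x, false) S)) as [i0|i0];
  destruct (classic (In (x, true) S)) as [i1|i1].
  - exfalso. exact (realizable_consistent H S x HS i0 i1).
  - rewrite (ind_true _ i0), (ind_false _ i1), ind_true; [lia|].
    apply in_map_iff. exists (x, false). auto.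
  - rewrite (ind_false _ i0), (ind_true _ i1), ind_true; [lia|].
    apply in_map_iff. exists (x, true). auto.
  - rewrite (ind_false _ i0), (ind_false _ i1). lia.
Qed.

Lemma label_occurrences_bound {X : Type} (H : hclass X) (m : nat) (C : list (dataset X)) :
  (forall S, In S C -> vertex H m S) ->
  sum_over (points C) (fun x => count_label C false x + count_label C true x) <= m * length C.
Proof.
  intros Hv. unfold count_label.
  rewrite (sum_over_ext (points C) _
             (fun x => sum_over C (fun S => ind (In (x, false) S) + ind (In (x, true) S))))
    by (intros x _; symmetry; apply sum_over_plus).
  rewrite sum_over_swap, <- sum_over_const. apply sum_over_le. intros S HS.
  destruct (Hv S HS) as [Hlen HS']. rewrite <- Hlen.
  apply (dataset_label_count H), HS'. apply points_NoDup.
Qed.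

(* Otherwise [n_0 n_1 <= (t - 1)(n_0 + n_1)] everywhere and the two bounds
   above give [K (K - 1) <= 2 (t - 1) m K], i.e. [K < 2 m t]. *)
Lemma balanced_point {X : Type} (H : hclass X) (m t : nat) (C : list (dataset X)) :
  1 <= m -> 1 <= t -> is_clique H m C -> 2 * m * t <= length C ->
  exists x, t <= count_label C false x /\ t <= count_label C true x.
Proof.
  intros Hm Ht [Hnd [Hv Hadj]] HK.
  destruct (classic (exists x, t <= count_label C false x /\ t <= count_label C true x))
    as [ok|none]; [exact ok|exfalso].
  set (n0 := count_label C false) in *. set (n1 := count_label C true) in *.
  assert (Hmin : forall x, n0 x * n1 x <= (t - 1) * (n0 x + n1 x)).
  { intros x. assert (n0 x < t \/ n1 x < t).
    { destruct (le_lt_dec t (n0 x)), (le_lt_dec t (n1 x)); try lia.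
      exfalso. apply none. exists x. auto. }
    nia. }
  assert (Hpairs := ordered_pairs_bound C Hnd Hadj). fold n0 n1 in Hpairs.
  assert (Hlabels := label_occurrences_bound H m C Hv). fold n0 n1 in Hlabels.
  assert (Hsum := sum_over_le (points C) _ _ (fun x _ => Hmin x)).
  rewrite sum_over_mul_l in Hsum, Hpairs.
  assert ((t - 1) * sum_over (points C) (fun x => n0 x + n1 x)
          <= (t - 1) * (m * length C)) by (apply Nat.mul_le_mono_l; exact Hlabels).
  assert (Hcut : length C * (length C - 1) <= length C * (2 * (t - 1) * m)).
  { replace (length C * (2 * (t - 1) * m)) with (2 * (t - 1) * (m * length C)) by ring.
    lia. }
  apply Nat.mul_le_mono_pos_l in Hcut; nia.
Qed.

Definition restrict {X : Type} (H : hclass X) (x : X) (b : bool) : hclass X :=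
  fun h => H h /\ h x = b.

Definition with_label {X : Type} (C : list (dataset X)) (x : X) (b : bool) : list (dataset X) :=
  filter (fun S => decb (In (x, b) S)) C.

Lemma with_label_length {X : Type} (C : list (dataset X)) (x : X) (b : bool) :
  length (with_label C x b) = count_label C b x.
Proof. symmetry. apply sum_over_ind_filter. Qed.

Lemma with_label_clique {X : Type} (H : hclass X) (m : nat) (C : list (dataset X)) (x : X) (b : bool) :
  is_clique H m C -> is_clique (restrict H x b) m (with_label C x b).
Proof.
  intros [Hnd [Hv Hadj]]. split; [apply NoDup_filter, Hnd|split].
  - intros S HS. apply filter_In in HS. destruct HS as [HS Hb].
    apply (proj1 (decb_spec _)) in Hb. destruct (Hv S HS) as [Hlen [h [Hh Hag]]].
    split; [exact Hlen|]. exists h. split; [split; [exact Hh|apply Hag, Hb]|exact Hag].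
  - intros S S' HS HS'. apply filter_In in HS, HS'. apply Hadj; tauto.
Qed.

Lemma leaf_shatters {X : Type} (H : hclass X) (h : X -> bool) : H h -> shatters H Leaf.
Proof. intros Hh p [<-|[]]. exists h. split; [exact Hh|intros ? ? []]. Qed.

Lemma node_shatters {X : Type} (H : hclass X) (x : X) (t0 t1 : mtree X) :
  shatters (restrict H x false) t0 -> shatters (restrict H x true) t1 ->
  shatters H (Node x t0 t1).
Proof.
  intros Hs0 Hs1 p Hp. simpl in Hp. apply in_app_or in Hp.
  destruct Hp as [Hp|Hp]; apply in_map_iff in Hp; destruct Hp as [p' [<- Hp']].
  - destruct (Hs0 p' Hp') as [h [[Hh Hx] Hag]]. exists h. split; [exact Hh|].
    intros z y [E|E]; [injection E as -> <-; exact Hx|auto].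
  - destruct (Hs1 p' Hp') as [h [[Hh Hx] Hag]]. exists h. split; [exact Hh|].
    intros z y [E|E]; [injection E as -> <-; exact Hx|auto].
Qed.

(* A clique of size [(2m)^k] in [G_m(H)] yields a shattered tree of depth [k]:
   split at a balanced point and recurse on both halves (each of size
   [>= (2m)^(k-1)]) with the corresponding restricted classes. *)
Lemma clique_shatters {X : Type} (m k : nat) (H : hclass X) (C : list (dataset X)) :
  1 <= m -> is_clique H m C -> (2 * m) ^ k <= length C -> shatters_depth H k.
Proof.
  intros Hm. revert H C. induction k as [|k IH]; intros H C HC Hlen.
  - destruct C as [|S C]; simpl in Hlen; [lia|].
    destruct HC as [_ [Hv _]]. destruct (Hv S (or_introl eq_refl)) as [_ [h [Hh _]]].
    exists Leaf. split; [exact I|exact (leaf_shatters H h Hh)].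
  - assert (Ht : 1 <= (2 * m) ^ k) by (apply Nat.neq_0_lt_0, Nat.pow_nonzero; lia).
    rewrite Nat.pow_succ_r' in Hlen.
    destruct (balanced_point H m ((2 * m) ^ k) C Hm Ht HC ltac:(lia)) as [x [H0 H1]].
    assert (Sub : forall b, (2 * m) ^ k <= count_label C b x ->
                            shatters_depth (restrict H x b) k).
    { intros b Hb. apply (IH _ (with_label C x b)).
      - apply with_label_clique, HC.
      - rewrite with_label_length. exact Hb. }
    destruct (Sub false H0) as [t0 [Hc0 Hs0]]. destruct (Sub true H1) as [t1 [Hc1 Hs1]].
    exists (Node x t0 t1). split; [split; assumption|exact (node_shatters H x t0 t1 Hs0 Hs1)].
Qed.

Lemma full_clique_forces_exp_lt {X : Type} (H : hclass X) (d m : nat) :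
  LD_eq H d -> clique_number_eq H m (2 ^ m) -> 1 <= m -> 2 ^ m < (2 * m) ^ (d + 1).
Proof.
  intros [_ Hmax] [[C [HC Hlen]] _] Hm.
  destruct (le_lt_dec ((2 * m) ^ (d + 1)) (2 ^ m)) as [Hle|Hlt]; [exfalso|exact Hlt].
  assert (Hsh := clique_shatters m (d + 1) H C Hm HC ltac:(lia)).
  apply Hmax in Hsh. lia.
Qed.

(* Integer form of [(1 + 1/m)^n <= (m + 1) / (m + 1 - n)]. *)
Lemma bernoulli_ratio n m : n <= m + 1 -> (m + 1 - n) * (m + 1) ^ n <= m ^ n * (m + 1).
Proof.
  induction n as [|n IH]; intros Hn; simpl; [lia|].
  specialize (IH ltac:(lia)).
  set (P := (m + 1) ^ n) in *. set (Q := m ^ n) in *.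
  assert (Hk : (m + 1 - S n) * (m + 1) <= m * (m + 1 - n)) by nia.
  nia.
Qed.

Lemma succ_pow_le_double n m : 2 * n <= m -> (m + 1) ^ n <= 2 * m ^ n.
Proof.
  intros Hnm. pose proof (bernoulli_ratio n m ltac:(lia)).
  set (P := (m + 1) ^ n) in *. set (Q := m ^ n) in *. nia.
Qed.

Lemma exp_beats_poly_step n m :
  2 * n <= m -> (2 * m) ^ n <= 2 ^ m -> (2 * (m + 1)) ^ n <= 2 ^ (m + 1).
Proof.
  intros Hnm Hm. rewrite !Nat.pow_mul_l in *. rewrite Nat.pow_add_r.
  pose proof (succ_pow_le_double n m Hnm).
  set (P := (m + 1) ^ n) in *. set (Q := m ^ n) in *.
  set (T := 2 ^ n) in *. set (U := 2 ^ m) in *. simpl (2 ^ 1). nia.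
Qed.

Lemma exp_beats_poly_mono n m0 m :
  2 * n <= m0 -> m0 <= m -> (2 * m0) ^ n <= 2 ^ m0 -> (2 * m) ^ n <= 2 ^ m.
Proof.
  intros Hn Hm Hbase. induction Hm as [|m Hm IH]; [exact Hbase|].
  replace (S m) with (m + 1) by lia. apply exp_beats_poly_step; [lia|exact IH].
Qed.

Lemma linear_le_pow2 a b c q0 q :
  a <= c * 2 ^ q0 -> a * q0 + b <= c * 2 ^ q0 -> q0 <= q -> a * q + b <= c * 2 ^ q.
Proof.
  intros Ha Hbase Hq. induction Hq as [|q Hq IH]; [exact Hbase|].
  assert (c * 2 ^ q0 <= c * 2 ^ q)
    by (apply Nat.mul_le_mono_l, Nat.pow_le_mono_r; lia).
  rewrite Nat.pow_succ_r'. lia.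
Qed.

(* Since [2 * 27 <= 64], [2^k 3^n <= 4^n] as soon as [n >= 3 k]. *)
Lemma pow2_mul_pow3_le_pow4 k n : 3 * k <= n -> 2 ^ k * 3 ^ n <= 4 ^ n.
Proof.
  intros Hkn. replace n with (3 * k + (n - 3 * k)) by lia.
  generalize (n - 3 * k) as r. intros r.
  rewrite !Nat.pow_add_r, !Nat.pow_mul_r.
  assert (Hk : 2 ^ k * (3 ^ 3) ^ k <= (4 ^ 3) ^ k)
    by (rewrite <- Nat.pow_mul_l; apply Nat.pow_le_mono_l; simpl; lia).
  assert (Hr : 3 ^ r <= 4 ^ r) by (apply Nat.pow_le_mono_l; lia).
  nia.
Qed.

(* The central estimate for [d >= 2^q], [q >= 5]:
   [2 (4 (q+1))^(d+1) <= (2^q)^(d-1)], from [16 (q+1) <= 3 2^q] and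
   [2 4^q 3^(d+1) <= 4^(d+1)]. *)
Lemma key_inequality q d :
  5 <= q -> 2 ^ q <= d -> 2 * (4 * (q + 1)) ^ (d + 1) <= (2 ^ q) ^ (d - 1).
Proof.
  intros Hq Hd.
  assert (Hlin : 16 * q + 16 <= 3 * 2 ^ q)
    by (apply (linear_le_pow2 16 16 3 5); cbn; lia).
  assert (Hlin' : 6 * q + 2 <= 1 * 2 ^ q)
    by (apply (linear_le_pow2 6 2 1 5); cbn; lia).
  assert (H34 := pow2_mul_pow3_le_pow4 (2 * q + 1) (d + 1) ltac:(lia)).
  assert (E2 : 2 ^ (2 * q + 1) = 2 * (2 ^ q * 2 ^ q))
    by (replace (2 * q + 1) with (q + q + 1) by lia; rewrite !Nat.pow_add_r; simpl; lia).
  assert (Hbase : (4 * (4 * (q + 1))) ^ (d + 1) <= (3 * 2 ^ q) ^ (d + 1))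
    by (apply Nat.pow_le_mono_l; lia).
  rewrite (Nat.pow_mul_l 4 (4 * (q + 1))), (Nat.pow_mul_l 3 (2 ^ q)) in Hbase.
  assert (E : (2 ^ q) ^ (d + 1) = (2 ^ q) ^ (d - 1) * (2 ^ q * 2 ^ q)).
  { replace (d + 1) with ((d - 1) + 2) by lia. rewrite Nat.pow_add_r. simpl. lia. }
  rewrite E in Hbase. rewrite E2 in H34.
  assert (Hpos : 0 < 4 ^ (d + 1)) by (apply Nat.neq_0_lt_0, Nat.pow_nonzero; lia).
  set (a := (4 * (q + 1)) ^ (d + 1)) in *. set (b := 4 ^ (d + 1)) in *.
  set (c := 3 ^ (d + 1)) in *. set (e := 2 ^ q) in *. set (f := e ^ (d - 1)) in *.
  apply (Nat.mul_le_mono_pos_l _ _ b Hpos).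
  assert (f * (2 * (e * e) * c) <= f * b) by (apply Nat.mul_le_mono_l; exact H34).
  replace (b * (2 * a)) with (2 * (b * a)) by ring.
  replace (b * f) with (f * b) by ring.
  assert (2 * (c * (f * (e * e))) = f * (2 * (e * e) * c)) by ring.
  lia.
Qed.

Lemma small_degree_base d : d <= 31 -> (2 * 301) ^ (d + 1) <= 2 ^ 301.
Proof.
  intros Hd. apply Nat.le_trans with (602 ^ 32); [apply Nat.pow_le_mono_r; lia|].
  apply Nat2Z.inj_le. rewrite !Nat2Z.inj_pow. vm_compute. discriminate.
Qed.

(* Base point [m0 = floor (log2 (d^(2d)))] for [d >= 32]: with [q = floor (log2 d)],
   [2dq <= m0 < 2d(q+1)], so [2 (2 m0)^(d+1) <= d^(d+1) 2 (4(q+1))^(d+1)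
   <= d^(2d) < 2^(m0+1)] by [key_inequality]. *)
Lemma large_degree_base d : 32 <= d ->
  2 * (d + 1) <= Nat.log2 (d ^ (2 * d)) /\
  (2 * Nat.log2 (d ^ (2 * d))) ^ (d + 1) <= 2 ^ Nat.log2 (d ^ (2 * d)).
Proof.
  intros Hd. set (q := Nat.log2 d). set (m0 := Nat.log2 (d ^ (2 * d))).
  assert (Hq : 2 ^ q <= d < 2 ^ S q) by (apply Nat.log2_spec; lia).
  assert (Hq5 : 5 <= q) by (apply (Nat.log2_le_pow2 d 5); cbn; lia).
  assert (HD : 0 < d ^ (2 * d)) by (apply Nat.neq_0_lt_0, Nat.pow_nonzero; lia).
  assert (Hm0 : 2 ^ m0 <= d ^ (2 * d) < 2 ^ S m0) by (apply Nat.log2_spec; exact HD).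
  assert (Hlow : 2 * d * q <= m0).
  { apply Nat.lt_succ_r, (Nat.pow_lt_mono_r_iff 2); [lia|].
    apply Nat.le_lt_trans with (d ^ (2 * d)); [|lia].
    rewrite (Nat.mul_comm (2 * d) q), (Nat.pow_mul_r 2). apply Nat.pow_le_mono_l; lia. }
  assert (Hup : m0 < 2 * d * (q + 1)).
  { apply (Nat.pow_lt_mono_r_iff 2); [lia|].
    apply Nat.le_lt_trans with (d ^ (2 * d)); [lia|].
    rewrite (Nat.mul_comm (2 * d) (q + 1)), (Nat.pow_mul_r 2).
    apply Nat.pow_lt_mono_l; [lia|]. rewrite Nat.add_1_r. lia. }
  split; [nia|].
  assert (K := key_inequality q d Hq5 ltac:(lia)).
  assert (H1 : (2 * m0) ^ (d + 1) <= (d * (4 * (q + 1))) ^ (d + 1))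
    by (apply Nat.pow_le_mono_l; lia).
  rewrite (Nat.pow_mul_l d (4 * (q + 1))) in H1.
  assert (H2 : (2 ^ q) ^ (d - 1) <= d ^ (d - 1)) by (apply Nat.pow_le_mono_l; lia).
  assert (E : d ^ (2 * d) = d ^ (d + 1) * d ^ (d - 1))
    by (rewrite <- Nat.pow_add_r; f_equal; lia).
  rewrite E in Hm0. simpl (2 ^ S m0) in Hm0.
  set (a := (4 * (q + 1)) ^ (d + 1)) in *. set (b := d ^ (d + 1)) in *.
  set (c := d ^ (d - 1)) in *. set (e := (2 ^ q) ^ (d - 1)) in *.
  assert (b * (2 * a) <= b * c) by (apply Nat.mul_le_mono_l; lia).
  nia.
Qed.

(* For [m >= 301], [2^m < (2m)^(d+1)] forces [2^m <= d^(2d)]: otherwise the base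
   point lies below [m] and monotonicity gives [(2m)^(d+1) <= 2^m]. *)
Lemma exp_dominates_bound d m :
  301 <= m -> 2 ^ m < (2 * m) ^ (d + 1) -> 2 ^ m <= d ^ (2 * d).
Proof.
  intros Hm Hlt.
  destruct (le_lt_dec (2 ^ m) (d ^ (2 * d))) as [ok|Hgt]; [exact ok|exfalso].
  enough ((2 * m) ^ (d + 1) <= 2 ^ m) by lia.
  destruct (le_lt_dec d 31) as [Hd|Hd].
  - apply (exp_beats_poly_mono (d + 1) 301); [lia|lia|exact (small_degree_base d Hd)].
  - destruct (large_degree_base d Hd) as [Hn Hbase].
    apply (exp_beats_poly_mono (d + 1) (Nat.log2 (d ^ (2 * d)))); [lia| |exact Hbase].
    apply Nat.lt_le_incl, Nat.log2_lt_pow2; [|exact Hgt].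
    apply Nat.neq_0_lt_0, Nat.pow_nonzero; lia.
Qed.

Lemma log_bound_of_pow_bound d m : 2 ^ m <= d ^ (2 * d) -> (INR m <= two_d_log2_d d)%R.
Proof.
  intros Hp. destruct d as [|d'].
  - destruct m as [|m]; [simpl; lra|].
    pose proof (Nat.pow_nonzero 2 m ltac:(lia)). simpl in Hp. lia.
  - set (d := S d').
    change (two_d_log2_d d) with (2 * INR d * (ln (INR d) / ln 2))%R.
    assert (Hl2 : (0 < ln 2)%R) by (pose proof ln_lt_2; lra).
    assert (Hdpos : (0 < INR d)%R) by (apply lt_0_INR; unfold d; lia).
    apply le_INR in Hp. rewrite !pow_INR in Hp.
    assert (Hln : (ln (INR 2 ^ m) <= ln (INR d ^ (2 * d)))%R).
    { destruct (Rle_lt_or_eq_dec _ _ Hp) as [lt|E]; [|rewrite E; apply Rle_refl].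
      left. apply ln_increasing; [apply pow_lt; simpl; lra|exact lt]. }
    assert (H2pos : (0 < INR 2)%R) by (simpl; lra).
    rewrite (ln_pow _ H2pos), (ln_pow _ Hdpos), mult_INR in Hln.
    replace (INR 2) with 2%R in Hln by (simpl; lra).
    apply Rmult_le_reg_r with (ln 2); [exact Hl2|].
    replace (2 * INR d * (ln (INR d) / ln 2) * ln 2)%R with (2 * INR d * ln (INR d))%R
      by (field; lra).
    exact Hln.
Qed.

Theorem mainTheorem13 (X : Type) (H : hclass X) (d : nat) :
  LD_eq H d ->
  forall m : nat, clique_number_eq H m (2 ^ m) ->
  (INR m <= Rmax (two_d_log2_d d) 300)%R.
Proof.
  intros HLD m Hclique.
  destruct (le_lt_dec m 300) as [Hsmall|Hlarge].
  - apply Rle_trans with 300%R; [|apply Rmax_r].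
    replace 300%R with (INR 300) by (rewrite INR_IZR_INZ; reflexivity).
    apply le_INR, Hsmall.
  - apply Rle_trans with (two_d_log2_d d); [|apply Rmax_l].
    apply log_bound_of_pow_bound, exp_dominates_bound; [lia|].
    apply (full_clique_forces_exp_lt H); [exact HLD|exact Hclique|lia].
Qed.
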